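(* For any finite alphabet $\mathfrak{G}$ and any $\mathfrak{G}$-trees $\mathfrak{s}$, $\mathfrak{t}$ such that $\mathfrak{s}\preceq\mathfrak{t}$, the interval $[\mathfrak{s},\mathfrak{t}]$ of the $\mathfrak{G}$-prefix poset is isomorphic as a lattice to $J(P_s)$, where $s := \mathrm{sh}(\lozenge_{|\mathfrak{s}|}[\mathfrak{t}\setminus\mathfrak{s}])$.
   Context: $\mathfrak{G}$ is a finite alphabet (letters with arities $\geq 1$). A $\mathfrak{G}$-tree is either the leaf (the tree with no internal node) or a root decorated by a letter $\mathtt{a}\in\mathfrak{G}$ with $|\mathtt{a}|$ children that are $\mathfrak{G}$-trees; $|\mathfrak{s}|$ is the number of leaves. The $\mathfrak{G}$-prefix poset is the set of $\mathfrak{G}$-trees ordered by $\mathfrak{s}\preceq\mathfrak{t}$ iff $\mathfrak{t}$ is obtained by grafting $\mathfrak{G}$-trees $\mathfrak{r}_1,\dots,\mathfrak{r}_{|\mathfrak{s}|}$ onto the leaves of $\mathfrak{s}$ (left to right); then $\mathfrak{t}\setminus\mathfrak{s} := (\mathfrak{r}_1,\dots,\mathfrak{r}_{|\mathfrak{s}|})$, and its intervals are lattices (with meet = largest common part from the root and join = superimposition). $\lozenge_k[\mathfrak{r}_1,\dots,\mathfrak{r}_k]$ is the tree with root decorated by a new letter $\lozenge_k$ of arity $k$ and children $\mathfrak{r}_1,\dots,\mathfrak{r}_k$. A shadow is a finite (possibly empty) multiset of shadows, i.e. a nonplanar undecorated rooted tree. For a tree $\mathfrak{t}$ different from the leaf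 with root of arity $k$, $\mathrm{sh}(\mathfrak{t})$ is the multiset of the $\mathrm{sh}(\mathfrak{t}(i))$ over those $i\in[k]$ such that the $i$-th subtree $\mathfrak{t}(i)$ is not the leaf. For a shadow $s$, $P_s$ is the poset on the nodes of $s$ other than its root, where $u<v$ iff $u$ is an ancestor of $v$. For a poset $P$, $J(P)$ is the lattice of order ideals (down-closed subsets) of $P$ ordered by inclusion, with intersection and union as meet and join. *)

From mathcomp Require Import all_boot.
Set Implicit Arguments. Unset Strict Implicit. Unset Printing Implicit Defensive.

Inductive tree (L : Type) : Type :=
| Leaf : tree L
| Node : L -> seq (tree L) -> tree L.
Arguments Leaf {L}.

Section Trees.
Variables (L : Type) (ar : L -> nat).

Fixpoint wf (t : tree L) : bool :=
  match t with
  | Leaf => true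
  | Node a cs => (size cs == ar a) && all wf cs
  end.

Fixpoint nleaves (t : tree L) : nat :=
  match t with
  | Leaf => 1
  | Node _ cs => sumn (map nleaves cs)
  end.

Fixpoint graft (s : tree L) (rs : seq (tree L)) : tree L :=
  match s with
  | Leaf => head Leaf rs
  | Node a cs =>
      Node a ((fix go (cs : seq (tree L)) (rs : seq (tree L)) :=
                 match cs with
                 | [::] => [::]
                 | c :: cs' => graft c (take (nleaves c) rs)
                                 :: go cs' (drop (nleaves c) rs)
                 end) cs rs)
  end.

(* prefix order: s <= t iff t is obtained by grafting G-trees r_1..r_|s|
   onto the leaves of s; then t \ s = (r_1, ..., r_|s|). *)
Definition is_diff (s t : tree L) (rs : seq (tree L)) : Prop :=
  [/\ size rs = nleaves s, all wf rs & graft s rs = t].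

Definition tprefix (s t : tree L) : Prop := exists rs, is_diff s t rs.

Definition interval (s t u : tree L) : Prop :=
  [/\ wf u, tprefix s u & tprefix u t].

End Trees.

Fixpoint tmap (L L' : Type) (g : L -> L') (t : tree L) : tree L' :=
  match t with
  | Leaf => Leaf
  | Node a cs => Node (g a) (map (tmap g) cs)
  end.

(* lozenge_k [r_1, ..., r_k] : root decorated by a new letter (None) of
   arity k = size rs, with children r_1, ..., r_k. *)
Definition diamond (L : Type) (rs : seq (tree L)) : tree (option L) :=
  Node None (map (tmap Some) rs).

(* A shadow is represented by a planar undecorated rooted tree; the order
   of children is irrelevant for everything below (J(P_s) is invariant). *)
Inductive shadow : Type := SNode of seq shadow.

(* sh(t) for t not the leaf: the (multi)set of sh(t(i)) over the non-leaf
   children t(i). (The value on the leaf is an unused dummy.) *)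
Fixpoint sh (L : Type) (t : tree L) : shadow :=
  match t with
  | Leaf => SNode [::]
  | Node _ cs =>
      SNode ((fix go (cs : seq (tree L)) :=
                match cs with
                | [::] => [::]
                | Leaf :: cs' => go cs'
                | c :: cs' => sh c :: go cs'
                end) cs)
  end.

Definition schildren (s : shadow) : seq shadow := let: SNode ss := s in ss.

(* nodes of a shadow are addressed by paths from the root; [::] = root *)
Fixpoint snode (s : shadow) (p : seq nat) {struct p} : bool :=
  match p with
  | [::] => true
  | i :: p' => (i < size (schildren s)) &&
               snode (nth (SNode [::]) (schildren s) i) p'
  end.

(* P_s: elements = non-root nodes of s; u <= v iff u is an ancestor of v
   (or u = v), i.e. the path of u is a prefix of the path of v. *)
Definition Ps_elt (s : shadow) (p : seq nat) : bool := (p != [::]) && snode s p.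
Definition Ps_le (u v : seq nat) : bool := prefix u v.

Definition is_ideal (s : shadow) (I : pred (seq nat)) : Prop :=
  (forall p, I p -> Ps_elt s p) /\
  (forall u v, I v -> Ps_elt s u -> Ps_le u v -> I u).

(* The poset (D, le) is isomorphic to J(P_s): an order isomorphism
   (bijection, monotone in both directions) onto the order ideals of P_s
   ordered by inclusion; ideals are identified up to extensional equality. *)
Definition iso_to_J (T : Type) (D : T -> Prop) (le : T -> T -> Prop)
    (s : shadow) : Prop :=
  exists f : T -> pred (seq nat),
    [/\ forall u, D u -> is_ideal s (f u),
        forall u v, D u -> D v -> (le u v <-> {subset f u <= f v}) &
        forall I, is_ideal s I -> exists2 u, D u & f u =i I].

From mathcomp Require Import all_boot.
Set Implicit Arguments. Unset Strict Implicit. Unset Printing Implicit Defensive.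

(* Cutting at the leaves of [s] identifies the interval [[s, t]] with the forests
   [us] of prefixes of [t \ s = rs], ordered componentwise: [u = graft s us] with
   [us = cut s u].  A prefix of a tree [r] is determined by the set of internal
   nodes of [r] it keeps; this set is down-closed, and every down-closed set is
   kept by exactly one prefix, obtained by trimming [r].  The internal nodes of
   the trees of [rs], ordered by ancestry, are exactly the non-root nodes of
   [sh (diamond rs)]. *)

Section All2.
Variables (S T : Type) (r : S -> T -> bool).

Lemma all2_size s t : all2 r s t -> size s = size t.
Proof. by rewrite all2E => /andP[/eqP]. Qed.

Lemma all2_nthP x y s t : size s = size t ->
  reflect (forall i, i < size s -> r (nth x s i) (nth y t i)) (all2 r s t).
Proof.
elim: s t => [|a s IH] [|b t] //= => [_|[size_st]]; first by left.
apply: (iffP andP) => [[rab /(IH _ size_st) rst] [|i] // | rst].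
  exact: rst.
by split; [exact: (rst 0) | apply/(IH _ size_st) => i; exact: (rst i.+1)].
Qed.

Lemma all2_nth x y s t i : all2 r s t -> i < size t -> r (nth x s i) (nth y t i).
Proof.
move=> rst; rewrite -(all2_size rst) => lt_is.
exact: (elimT (all2_nthP x y (all2_size rst))) rst i lt_is.
Qed.

Lemma all2_cat s1 s2 t1 t2 : size s1 = size t1 ->
  all2 r (s1 ++ s2) (t1 ++ t2) = all2 r s1 t1 && all2 r s2 t2.
Proof. by elim: s1 t1 => [|a s1 IH] [|b t1] //= [size_st]; rewrite IH // andbA. Qed.

End All2.
Arguments all2_nthP {S T r} x y {s t}.

Section Forests.
Variable L : Type.
Implicit Types (r : tree L) (us rs cs : seq (tree L)).

Lemma tree_ind_nth (P : tree L -> Prop) : P Leaf ->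
    (forall a cs, (forall i, i < size cs -> P (nth Leaf cs i)) -> P (Node a cs)) ->
  forall t, P t.
Proof.
move=> PLeaf PNode; fix IH 1 => -[|a cs]; first exact: PLeaf.
apply: PNode; elim: cs => [|c cs IHcs] [|i] lt_i;
  [exact: PLeaf | exact: PLeaf | exact: IH | exact: IHcs].
Qed.

Definition nonleaf r := if r is Node _ _ then true else false.
Definition children r := if r is Node _ cs then cs else [::].

Lemma forest_ind (Q : seq (tree L) -> Prop) :
    (forall rs, (forall i, i < size rs -> Q (children (nth Leaf rs i))) -> Q rs) ->
  forall rs, Q rs.
Proof.
move=> step rs; apply: (step) => i _.
by elim/tree_ind_nth: (nth Leaf rs i) => [|a cs IH]; apply: step.
Qed.

(* Shadows forget leaf children: the [j]-th child of the shadow of a forest [rs]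
   is the shadow of its [j]-th non-leaf tree, which sits at [nonleaf_pos rs j]. *)
Fixpoint nonleaf_pos rs j : nat :=
  match rs with
  | [::] => 0
  | r :: rs' =>
      if nonleaf r then (if j is j'.+1 then (nonleaf_pos rs' j').+1 else 0)
      else (nonleaf_pos rs' j).+1
  end.

Lemma nonleaf_posP rs j : j < count nonleaf rs ->
  [/\ nonleaf_pos rs j < size rs, nonleaf (nth Leaf rs (nonleaf_pos rs j))
    & count nonleaf (take (nonleaf_pos rs j) rs) = j].
Proof.
elim: rs j => [|[|a cs] rs IH] [|j] //= /IH[lt_p nl_p cnt_p];
  by rewrite ?add0n cnt_p.
Qed.

Lemma nonleaf_pos_count rs i : i < size rs -> nonleaf (nth Leaf rs i) ->
  nonleaf_pos rs (count nonleaf (take i rs)) = i /\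
  count nonleaf (take i rs) < count nonleaf rs.
Proof.
elim: rs i => [|r rs IH] [|i] //=; first by case: r.
move=> lt_i /(IH _ lt_i)[pos_i lt_c].
by case: r => [|a cs] /=; rewrite ?add0n ?add1n /= pos_i.
Qed.

Fixpoint shs cs : seq shadow :=
  match cs with
  | [::] => [::]
  | Leaf :: cs' => shs cs'
  | c :: cs' => sh c :: shs cs'
  end.

Lemma sh_Node a cs : sh (Node a cs) = SNode (shs cs).
Proof. by []. Qed.

Lemma size_shs rs : size (shs rs) = count nonleaf rs.
Proof. by elim: rs => [|[|a cs] rs IH] //=; rewrite IH. Qed.

Lemma nth_shs rs j : j < count nonleaf rs ->
  nth (SNode [::]) (shs rs) j = sh (nth Leaf rs (nonleaf_pos rs j)).
Proof. by elim: rs j => [|[|a cs] rs IH] [|j] //= lt_j; apply: IH. Qed.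

(* [inner us rs], for a forest [us] of prefixes of [rs], is the set of paths of
   the shadow of [rs] whose node is internal in [us]. *)
Fixpoint inner us rs (p : seq nat) : bool :=
  if p is j :: q then
    let i := nonleaf_pos rs j in
    [&& j < count nonleaf rs, nonleaf (nth Leaf us i)
      & (q == [::]) || inner (children (nth Leaf us i)) (children (nth Leaf rs i)) q]
  else false.

Lemma Ps_elt_shs rs p : Ps_elt (SNode (shs rs)) p = inner rs rs p.
Proof.
elim: p rs => // j p IH rs; rewrite /Ps_elt /= size_shs.
have [lt_j|] := ltnP j (count nonleaf rs) => //=.
have [_ nl_j _] := nonleaf_posP lt_j; rewrite nth_shs //.
case: (nth Leaf rs _) nl_j => // a cs _; rewrite sh_Node.
by case: p IH => // k p IH; rewrite -IH.
Qed.

Lemma inner_at us rs i q : i < size rs -> nonleaf (nth Leaf rs i) ->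
  inner us rs (count nonleaf (take i rs) :: q) =
  nonleaf (nth Leaf us i) &&
  ((q == [::]) || inner (children (nth Leaf us i)) (children (nth Leaf rs i)) q).
Proof. by move=> lt_i /(nonleaf_pos_count lt_i)[pos_i lt_c] /=; rewrite lt_c pos_i. Qed.

Lemma inner_down us rs u v : inner us rs v -> u != [::] -> prefix u v -> inner us rs u.
Proof.
elim: u v us rs => // j u IH [|k v] us rs //= /and3P[lt_k nl_k in_v] _.
case/andP=> /eqP-> pre_uv; rewrite lt_k nl_k /=.
case: u pre_uv {IH}(IH v) => // x u pre_uv IH; apply/orP; right.
by case: v in_v pre_uv IH => // y v /= in_v pre_uv /(_ _ _ in_v); apply.
Qed.

(* [trim I r] keeps the nodes of [r] whose shadow path relative to [r] is in [I]
   (the root having path [[::]]); it inverts [inner]. *)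
Fixpoint trim (I : pred (seq nat)) r : tree L :=
  if r is Node a cs then
    if I [::] then
      Node a ((fix trims k cs {struct cs} :=
                 if cs is c :: cs' then
                   trim (fun p => I (k :: p)) c :: trims (k + nonleaf c) cs'
                 else [::]) 0 cs)
    else Leaf
  else Leaf.

Fixpoint trims (I : pred (seq nat)) k cs : seq (tree L) :=
  if cs is c :: cs' then trim (fun p => I (k :: p)) c :: trims I (k + nonleaf c) cs'
  else [::].

Lemma trim_Node I a cs : trim I (Node a cs) = if I [::] then Node a (trims I 0 cs) else Leaf.
Proof.
rewrite /=; case: (I [::]) => //; congr Node.
by elim: cs 0 => //= c cs IH k; rewrite IH.
Qed.

Lemma size_trims I k cs : size (trims I k cs) = size cs.
Proof. by elim: cs k => //= c cs IH k; rewrite IH. Qed.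

Lemma nth_trims I k cs i : i < size cs ->
  nth Leaf (trims I k cs) i =
  trim (fun p => I ((k + count nonleaf (take i cs)) :: p)) (nth Leaf cs i).
Proof. by elim: cs k i => [|c cs IH] k [|i] //= lt_i; rewrite ?addn0 // IH // addnA. Qed.

Lemma inner_trims (I : pred (seq nat)) rs p : p != [::] ->
    (forall q, q != [::] -> I q -> inner rs rs q) ->
    (forall u v, I v -> inner rs rs u -> prefix u v -> I u) ->
  inner (trims I 0 rs) rs p = I p.
Proof.
elim: p I rs => // j p IH I rs _ I_sub I_down.
have [lt_j|ge_j] := ltnP j (count nonleaf rs); last first.
  rewrite /= ltnNge ge_j /=; apply/esym/negbTE/negP => /(I_sub (j :: p) isT).
  by rewrite /= ltnNge ge_j.
have [lt_i nl_i cnt_i] := nonleaf_posP lt_j.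
rewrite /= lt_j nth_trims // add0n cnt_i.
case E: (nth Leaf rs _) nl_i => [|a cs] // _.
have inner_j q : inner rs rs (j :: q) = (q == [::]) || inner cs cs q by rewrite /= lt_j E.
rewrite trim_Node; case: ifP => Ij /=; last first.
  apply/esym/negbTE; apply: (contraFN _ Ij) => Ijp.
  by apply: (I_down _ (j :: p) Ijp); [rewrite inner_j | exact: (prefix_prefix [:: j])].
case: p IH => [|k p] IH; first by rewrite Ij.
apply: IH => // [q q_nz Iq | u v Iv inner_u uv].
  by have := I_sub (j :: q) isT Iq; rewrite inner_j (negbTE q_nz).
apply: (I_down (j :: u) (j :: v) Iv); first by rewrite inner_j inner_u orbT.
by rewrite prefix_cons eqxx.
Qed.

End Forests.
Arguments nonleaf {L}.
Arguments children {L}.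

Section Relabel.
Variables (L L' : Type) (g : L -> L').

Lemma shs_map_tmap (cs : seq (tree L)) :
    (forall i, i < size cs -> sh (tmap g (nth Leaf cs i)) = sh (nth Leaf cs i)) ->
  shs (map (tmap g) cs) = shs cs.
Proof.
elim: cs => // -[|b ds] cs IH sh_cs; first exact: IH (fun i => sh_cs i.+1).
by congr (_ :: _); [exact: (sh_cs 0) | exact: IH (fun i => sh_cs i.+1)].
Qed.

Lemma sh_tmap (t : tree L) : sh (tmap g t) = sh t.
Proof.
by elim/tree_ind_nth: t => // a cs IH; rewrite [tmap _ _]/= !sh_Node shs_map_tmap.
Qed.

End Relabel.

Lemma sh_diamond (L : Type) (rs : seq (tree L)) : sh (diamond rs) = SNode (shs rs).
Proof. by rewrite sh_Node shs_map_tmap // => i _; rewrite sh_tmap. Qed.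

Section Prefix.
Variables (A : eqType) (ar : A -> nat).
Implicit Types (s t u v r : tree A) (us vs rs cs ds : seq (tree A)).

Fixpoint tprefixb u r : bool :=
  match u, r with
  | Leaf, _ => wf ar r
  | Node a cs, Node b ds => (a == b) && all2 tprefixb cs ds
  | _, _ => false
  end.

Lemma tprefixb_Leaf_inv u : tprefixb u Leaf -> u = Leaf.
Proof. by case: u. Qed.

Lemma tprefixb_Node_inv a cs r :
  tprefixb (Node a cs) r -> exists2 ds, r = Node a ds & all2 tprefixb cs ds.
Proof. by case: r => // b ds /andP[/eqP <-]; exists ds. Qed.

Lemma tprefixb_wf u r : tprefixb u r -> wf ar r -> wf ar u.
Proof.
elim/tree_ind_nth: u r => // a cs IH r /tprefixb_Node_inv[ds -> cs_ds].
case/andP=> /eqP size_ds wf_ds; rewrite /= -size_ds (all2_size cs_ds) eqxx /=.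
apply/(all_nthP Leaf) => i lt_i; have lt_id : i < size ds by rewrite -(all2_size cs_ds).
exact: IH i lt_i _ (all2_nth Leaf Leaf cs_ds lt_id) (all_nthP Leaf wf_ds i lt_id).
Qed.

Lemma all2_tprefixb_wf us rs : all2 tprefixb us rs -> all (wf ar) rs -> all (wf ar) us.
Proof.
elim: us rs => [|u us IH] [|r rs] //= /andP[u_r us_rs] /andP[wf_r wf_rs].
by rewrite (tprefixb_wf u_r wf_r) (IH _ us_rs wf_rs).
Qed.

Fixpoint grafts cs rs : seq (tree A) :=
  if cs is c :: cs' then graft c (take (nleaves c) rs) :: grafts cs' (drop (nleaves c) rs)
  else [::].

Lemma graft_Node a cs rs : graft (Node a cs) rs = Node a (grafts cs rs).
Proof. by []. Qed.

Fixpoint cut s u : seq (tree A) :=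
  match s, u with
  | Leaf, _ => [:: u]
  | Node _ cs, Node _ ds =>
      (fix cuts cs ds := match cs, ds with
                         | c :: cs', d :: ds' => cut c d ++ cuts cs' ds'
                         | _, _ => [::]
                         end) cs ds
  | _, _ => [::]
  end.

Fixpoint cuts cs ds : seq (tree A) :=
  match cs, ds with
  | c :: cs', d :: ds' => cut c d ++ cuts cs' ds'
  | _, _ => [::]
  end.

Lemma cut_Node a cs b ds : cut (Node a cs) (Node b ds) = cuts cs ds.
Proof. by []. Qed.

Lemma tprefixb_graft s rs :
  size rs = nleaves s -> all (wf ar) rs -> tprefixb s (graft s rs).
Proof.
elim/tree_ind_nth: s rs => [|a cs IH] rs; first by case: rs => [|r []] //= _; rewrite andbT.
rewrite graft_Node /= eqxx /=.
elim: cs rs IH => [|c cs IHcs] rs IH //= size_rs.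
rewrite -{1}(cat_take_drop (nleaves c) rs) all_cat => /andP[wf_l wf_r].
have le_c : nleaves c <= size rs by rewrite size_rs leq_addr.
rewrite (IH 0) ?size_takel //=; apply: IHcs => // [i|]; first exact: IH i.+1.
by rewrite size_drop size_rs addKn.
Qed.

Lemma cut_graft s rs : size rs = nleaves s -> cut s (graft s rs) = rs.
Proof.
elim/tree_ind_nth: s rs => [|a cs IH] rs; first by case: rs => [|r []].
rewrite graft_Node cut_Node.
elim: cs rs IH => [|c cs IHcs] rs IH /= size_rs; first by rewrite (size0nil size_rs).
have le_c : nleaves c <= size rs by rewrite size_rs leq_addr.
rewrite (IH 0) ?size_takel // IHcs ?cat_take_drop // => [i|]; first exact: IH i.+1.
by rewrite size_drop size_rs addKn.
Qed.

Lemma is_diff_cut s u : tprefixb s u -> is_diff ar s u (cut s u).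
Proof.
elim/tree_ind_nth: s u => [|a cs IH] u; first by rewrite /is_diff /= andbT.
case/tprefixb_Node_inv=> ds -> cs_ds; rewrite /is_diff cut_Node graft_Node.
elim: cs ds IH cs_ds => [|c cs IHcs] [|d ds] IH //= /andP[c_d cs_ds].
have [size_c wf_c graft_c] := IH 0 isT d c_d.
have [size_cs wf_cs [graft_cs]] := IHcs ds (fun i => IH i.+1) cs_ds.
rewrite size_cat size_c size_cs all_cat wf_c wf_cs.
by rewrite take_size_cat // drop_size_cat // graft_c graft_cs.
Qed.

Lemma tprefixP s u : tprefix ar s u <-> tprefixb s u.
Proof.
split=> [[rs [size_rs wf_rs <-]] | s_u]; first exact: tprefixb_graft.
by exists (cut s u); apply: is_diff_cut.
Qed.

Lemma tprefixb_cut s u v : tprefixb s u -> tprefixb s v ->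
  tprefixb u v = all2 tprefixb (cut s u) (cut s v).
Proof.
elim/tree_ind_nth: s u v => [|a cs IH] u v; first by rewrite /= andbT.
case/tprefixb_Node_inv=> du -> cs_du /tprefixb_Node_inv[dv -> cs_dv].
rewrite !cut_Node /= eqxx /=.
elim: cs du dv IH cs_du cs_dv => [|c cs IHcs] [|d1 du] [|d2 dv] IH //=.
case/andP=> c_d1 cs_du /andP[c_d2 cs_dv].
have [[size_d1 _ _] [size_d2 _ _]] := (is_diff_cut c_d1, is_diff_cut c_d2).
rewrite all2_cat ?size_d1 ?size_d2 // (IH 0 isT d1 d2 c_d1 c_d2).
by rewrite (IHcs du dv (fun i => IH i.+1)).
Qed.

Lemma inner_sub us rs p : all2 tprefixb us rs -> inner us rs p -> inner rs rs p.
Proof.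
elim: p us rs => // j p IH us rs us_rs /and3P[lt_j nl_u in_p].
have [lt_i nl_r _] := nonleaf_posP lt_j; rewrite /= lt_j nl_r /=.
move: (all2_nth Leaf Leaf us_rs lt_i) nl_u in_p.
case: (nth Leaf us _) => // a cs /tprefixb_Node_inv[ds -> cs_ds] _ /=.
by case/orP=> [-> // | /(IH _ _ cs_ds) ->]; rewrite orbT.
Qed.

Lemma prefix_inner_subset us vs rs p : all2 tprefixb us vs -> all2 tprefixb vs rs ->
  inner us rs p -> inner vs rs p.
Proof.
elim: p us vs rs => // j p IH us vs rs us_vs vs_rs /and3P[lt_j nl_u in_p].
have [lt_i _ _] := nonleaf_posP lt_j; rewrite /= lt_j /=.
have lt_iv : nonleaf_pos rs j < size vs by rewrite (all2_size vs_rs).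
move: (all2_nth Leaf Leaf us_vs lt_iv) (all2_nth Leaf Leaf vs_rs lt_i) nl_u in_p.
case: (nth Leaf us _) => // a cs /tprefixb_Node_inv[ds -> cs_ds].
case/tprefixb_Node_inv=> es -> ds_es _ /=.
by case/orP=> [-> // | /(IH _ _ _ cs_ds ds_es) ->]; rewrite orbT.
Qed.

Lemma inner_subset_prefix rs us vs : all (wf ar) rs ->
    all2 tprefixb us rs -> all2 tprefixb vs rs ->
    {subset inner us rs <= inner vs rs} ->
  all2 tprefixb us vs.
Proof.
elim/forest_ind: rs us vs => rs IH us vs wf_rs us_rs vs_rs sub_uv.
have [size_us size_vs] := (all2_size us_rs, all2_size vs_rs).
apply/(all2_nthP Leaf Leaf (etrans size_us (esym size_vs))) => i.
rewrite size_us => lt_i; have IHi := IH i lt_i.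
have u_r := all2_nth Leaf Leaf us_rs lt_i; have v_r := all2_nth Leaf Leaf vs_rs lt_i.
have wf_r := all_nthP Leaf wf_rs i lt_i.
case Er: (nth Leaf rs i) => [|b ds] in u_r v_r wf_r IHi *.
  by rewrite (tprefixb_Leaf_inv u_r) (tprefixb_Leaf_inv v_r).
have inner_i ws q : inner ws rs (count nonleaf (take i rs) :: q) =
    nonleaf (nth Leaf ws i) && ((q == [::]) || inner (children (nth Leaf ws i)) ds q).
  by rewrite inner_at // Er.
have sub_i q : inner us rs (count nonleaf (take i rs) :: q) ->
    inner vs rs (count nonleaf (take i rs) :: q) by apply: sub_uv.
case Eu: (nth Leaf us i) => [|a cs] in u_r sub_i *; first exact: tprefixb_wf v_r wf_r.
case Ev: (nth Leaf vs i) => [|a' es] in v_r sub_i *.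
  by move: (sub_i [::]); rewrite !inner_i Eu Ev eqxx => /(_ isT).
move: u_r v_r => /andP[/eqP-> cs_ds] /andP[/eqP-> es_ds]; rewrite /= eqxx /=.
apply: IHi => //; first by case/andP: wf_r.
case=> // k q in_cs; move: (sub_i (k :: q)); rewrite !inner_i Eu Ev.
by rewrite [children _]/= (in_cs : inner cs ds (k :: q)) orbT => /(_ isT).
Qed.

Lemma trims_prefix (I : pred (seq nat)) k rs :
  all (wf ar) rs -> all2 tprefixb (trims I k rs) rs.
Proof.
elim/forest_ind: rs I k => rs IH I k wf_rs.
apply/(all2_nthP Leaf Leaf (size_trims I k rs)) => i; rewrite size_trims => lt_i.
rewrite nth_trims //; move: (IH i lt_i) (all_nthP Leaf wf_rs i lt_i).
case: (nth Leaf rs i) => [|a cs] // IHi wf_r.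
rewrite trim_Node; case: ifP => _ //=; rewrite eqxx IHi //.
by case/andP: wf_r.
Qed.

Lemma forest_iso_to_J rs : all (wf ar) rs ->
  iso_to_J (fun us => all2 tprefixb us rs) (fun us vs => all2 tprefixb us vs)
    (SNode (shs rs)).
Proof.
move=> wf_rs; exists (fun us => inner us rs); split.
- move=> us us_rs; split=> [p | u v in_v /andP[u_nz _]]; last exact: inner_down in_v u_nz.
  by rewrite Ps_elt_shs; apply: inner_sub.
- move=> us vs us_rs vs_rs; split=> [us_vs p | ]; last exact: inner_subset_prefix.
  exact: prefix_inner_subset us_vs vs_rs.
- move=> I [I_sub I_down]; exists (trims I 0 rs); first exact: trims_prefix.
  case=> [|j p]; first by apply/esym/negbTE/negP => /I_sub.
  apply: inner_trims => // [q _ | u v Iv]; rewrite -Ps_elt_shs; [exact: I_sub | exact: I_down].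
Qed.

Lemma cut_interval s t u : tprefixb s t -> interval ar s t u ->
  all2 tprefixb (cut s u) (cut s t).
Proof. by move=> s_t [_ /tprefixP s_u /tprefixP u_t]; rewrite -tprefixb_cut. Qed.

Lemma interval_graft s t us : tprefixb s t -> wf ar t ->
  all2 tprefixb us (cut s t) -> interval ar s t (graft s us).
Proof.
move=> s_t wf_t us_t; have [size_t wf_cut _] := is_diff_cut s_t.
have size_us : size us = nleaves s by rewrite (all2_size us_t).
have s_u : tprefixb s (graft s us).
  exact: tprefixb_graft size_us (all2_tprefixb_wf us_t wf_cut).
have u_t : tprefixb (graft s us) t by rewrite (tprefixb_cut s_u s_t) cut_graft.
by split; [exact: tprefixb_wf u_t wf_t | apply/tprefixP | apply/tprefixP].
Qed.

End Prefix.

Lemma iso_to_J_transfer (T U : Type) (D : T -> Prop) (E : U -> Prop)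
    (leT : T -> T -> Prop) (leU : U -> U -> Prop) (c : T -> U) (s : shadow) :
    (forall u, D u -> E (c u)) ->
    (forall u v, D u -> D v -> leT u v <-> leU (c u) (c v)) ->
    (forall w, E w -> exists2 u, D u & c u = w) ->
  iso_to_J E leU s -> iso_to_J D leT s.
Proof.
move=> DE le_c c_onto [f [f_ideal f_le f_onto]]; exists (f \o c); split.
- by move=> u /DE /f_ideal.
- by move=> u v Du Dv; apply: iff_trans (le_c u v Du Dv) (f_le _ _ (DE u Du) (DE v Dv)).
- by move=> I /f_onto[w /c_onto[u Du <-] fcI]; exists u.
Qed.

Theorem proposition3p10 (A : finType) (ar : A -> nat)
    (har : forall a : A, 0 < ar a) (s t : tree A) (rs : seq (tree A)) :
  wf ar s -> wf ar t -> tprefix ar s t -> is_diff ar s t rs ->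
  iso_to_J (interval ar s t) (tprefix ar) (sh (diamond rs)).
Proof.
move=> _ wf_t _ [size_rs wf_rs graft_rs].
have s_t : tprefixb ar s t by apply/tprefixP; exists rs.
have cut_t : cut s t = rs by rewrite -graft_rs cut_graft.
have wf_cut : all (wf ar) (cut s t) by rewrite cut_t.
rewrite sh_diamond -cut_t.
apply: (iso_to_J_transfer (c := cut s) _ _ _ (forest_iso_to_J wf_cut)).
- by move=> u; apply: cut_interval.
- move=> u v [_ /tprefixP s_u _] [_ /tprefixP s_v _].
  by rewrite -(tprefixb_cut s_u s_v); apply: tprefixP.
- move=> us us_t; exists (graft s us); first exact: interval_graft.
  by rewrite cut_graft // (all2_size us_t) cut_t.
Qed.
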